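(* For every temporal graph with static graph $G=(V,E)$ and lifetime $T_{\max}$ and every $\delta$, there is a strategy for the Discoverer that wins the ideal patient zero game in $T_{\max}|V|$ rounds.
   Context: A temporal graph $\mathcal G=(V,E,\lambda)$ with lifetime $T_{\max}$ consists of a finite undirected static graph $(V,E)$ and a labeling $\lambda:E\to\{1,\dots,T_{\max}\}$; edge $e$ is present only at time $\lambda(e)$. Infection model with parameter $\delta\in\mathbb N^+$: a seed $(u,t)$ makes $u$ infected at time $t$; otherwise a susceptible node $u$ becomes infected at time $t$ iff some neighbour $v$ infectious at time $t$ has $\lambda(uv)=t$ (exactly one infector recorded if several exist). A node infected at time $t$ is infectious at times $t+1,\dots,t+\delta$ and resistant afterwards. In each round the Discoverer (who knows $V$ and $E$) submits seed infections and the Adversary returns a consistent infection log (triples $(u,v,t)$: $u$ infected $v$ at time $t$) under some labeling consistent with all previous answers. A node $v$ is an ideal patient zero with time $t$ (and $(v,t)$ an IPZ pair) if seed-infecting only $(v,t)$ causes every node to become infected. In the IPZ game the Discoverer finally submits a pair $(u,t)$ or $\bot$; it loses if the pair is not an IPZ pair or if it submits $\bot$ while an IPZ pair exists, for some labeling consistent with all logs; otherwise it wins. *)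

From mathcomp Require Import all_boot.
Set Implicit Arguments. Unset Strict Implicit. Unset Printing Implicit Defensive.

Section TemporalInfection.
Variables (V : finType) (e : rel V) (Tmax delta : nat).

(* seed infections (u,t) and infection logs (u,v,t) : "u infected v at time t" *)
Definition seeds := seq (V * nat).
Definition inflog := seq (V * V * nat).

(* a labeling lambda : E -> {1..Tmax}, represented as a function on pairs,
   symmetric on edges (edges are undirected); values off edges are irrelevant *)
Definition labeling (lab : V -> V -> nat) : Prop :=
  forall u v, e u v -> lab u v = lab v u /\ 1 <= lab u v <= Tmax.

(* cur v = Some t' : v was infected at time t'; v is infectious at t'+1..t'+delta *)
Definition infectious (cur : V -> option nat) (v : V) (t : nat) : bool :=
  if cur v is Some t' then (t' < t) && (t <= t' + delta) else false.

Definition trigger (lab : V -> V -> nat) (S : seeds) (cur : V -> option nat)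
    (u : V) (t : nat) : bool :=
  ((u, t) \in S) || [exists v, [&& e u v, lab u v == t & infectious cur v t]].

Definition step (lab : V -> V -> nat) (S : seeds) (t : nat)
    (cur : V -> option nat) : V -> option nat :=
  fun u => if cur u is Some t' then Some t'
           else if trigger lab S cur u t then Some t else None.

Fixpoint infAt (lab : V -> V -> nat) (S : seeds) (t : nat) : V -> option nat :=
  match t with
  | 0 => step lab S 0 (fun _ => None)
  | t'.+1 => step lab S t'.+1 (infAt lab S t')
  end.

Definition inf_time (lab : V -> V -> nat) (S : seeds) : V -> option nat :=
  infAt lab S Tmax.

Definition valid_log (lab : V -> V -> nat) (S : seeds) (L : inflog) : Prop :=
  (forall u v t, (u, v, t) \in L ->
     [/\ inf_time lab S v = Some t, (v, t) \notin S, e u v, lab u v = t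
       & infectious (inf_time lab S) u t]) /\
  (forall v t, inf_time lab S v = Some t -> (v, t) \notin S ->
     exists! u, (u, v, t) \in L).

Definition IPZ (lab : V -> V -> nat) (v : V) (t : nat) : Prop :=
  1 <= t <= Tmax /\ forall u, inf_time lab [:: (v, t)] u != None.

(* correctness of the Discoverer's final answer (None = bottom) *)
Definition answer_correct (lab : V -> V -> nat) (a : option (V * nat)) : Prop :=
  match a with
  | Some (v, t) => IPZ lab v t
  | None => forall v t, ~ IPZ lab v t
  end.

(* lab is consistent with the first k rounds, where round j's query is
   query (take j r) and its answer is the j-th log of r *)
Definition consistent_upto (query : seq inflog -> seeds) (r : seq inflog)
    (lab : V -> V -> nat) (k : nat) : Prop :=
  forall j, j < k -> valid_log lab (query (take j r)) (nth [::] r j).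

(* An adaptive Discoverer strategy (query, answer) wins the IPZ game in n
   rounds: for every admissible behaviour of the Adversary (each answer is
   consistent with some labeling consistent with all previous answers), the
   final answer is correct for every labeling consistent with all logs. *)
Definition wins_IPZ_in (n : nat) (query : seq inflog -> seeds)
    (answer : seq inflog -> option (V * nat)) : Prop :=
  (forall h s, s \in query h -> 1 <= s.2 <= Tmax) /\
  forall r : seq inflog, size r = n ->
    (forall i, i < n -> exists lab, labeling lab /\ consistent_upto query r lab i.+1) ->
    forall lab, labeling lab -> consistent_upto query r lab n ->
      answer_correct lab (answer r).

End TemporalInfection.

(* The Discoverer seeds every candidate pair (v, t), 1 <= t <= Tmax, once,
   one per round.  Since a valid log names exactly one infector for every
   non-seed infection, the log of the round seeding (v, t) alone shows which
   nodes get infected, so it decides whether (v, t) is an ideal patient zero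
   for every labeling consistent with it.  The Discoverer answers the first
   candidate whose log covers all nodes, and bottom if there is none. *)
From mathcomp Require Import all_boot.

Set Implicit Arguments.
Unset Strict Implicit.
Unset Printing Implicit Defensive.

Section ZipMembership.
Variables (S T : eqType) (s : seq S) (t : seq T).
Hypothesis le_size : size s <= size t.

Lemma mem_zip1 x y : (x, y) \in zip s t -> x \in s.
Proof. by move=> /(map_f fst); rewrite -/(unzip1 _) unzip1_zip. Qed.

Lemma zip_partner x : x \in s -> exists y, (x, y) \in zip s t.
Proof.
move=> x_in; have /mapP[[x' y] xy_in /= eq_x] : x \in unzip1 (zip s t).
  by rewrite unzip1_zip.
by exists y; rewrite eq_x.
Qed.

End ZipMembership.

Section IdealPatientZero.
Variables (V : finType) (e : rel V) (Tmax delta : nat).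

Lemma infAt_persistent lab S t k u x :
  infAt e delta lab S t u = Some x -> infAt e delta lab S (t + k) u = Some x.
Proof.
move=> inf_x; elim: k => [|k IHk]; first by rewrite addn0.
by rewrite addnS /= /step IHk.
Qed.

Lemma infAt_seed lab S v t : (v, t) \in S -> infAt e delta lab S t v != None.
Proof.
by case: t => [|t] vt_in /=; rewrite /step /trigger vt_in //; case: infAt.
Qed.

Lemma inf_time_single_seed lab v t :
  t <= Tmax -> inf_time e Tmax delta lab [:: (v, t)] v != None.
Proof.
move=> le_t; rewrite /inf_time -(subnKC le_t).
have := infAt_seed lab (mem_head (v, t) [::]).
by case inf_v: infAt => [x|] // _; rewrite (infAt_persistent (Tmax - t) inf_v).
Qed.

Definition log_covers (v : V) (L : inflog V) : bool :=
  [forall u, (u == v) || has (fun x => x.1.2 == u) L].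

Lemma valid_log_IPZ lab v t L :
  1 <= t <= Tmax -> valid_log e Tmax delta lab [:: (v, t)] L ->
  log_covers v L <-> IPZ e Tmax delta lab v t.
Proof.
move=> t_range [log_sound log_complete]; split.
  move=> /forallP covers; split=> // u.
  case/orP: (covers u) => [/eqP-> | /hasP[[[w u'] t'] in_L /= /eqP u'u]].
    by apply: inf_time_single_seed; case/andP: t_range.
  by rewrite -u'u; case: (log_sound _ _ _ in_L) => ->.
case=> _ all_inf; apply/forallP => u; case: (eqVneq u v) => //= neq_uv.
move: (all_inf u); case inf_u: inf_time => [t'|] // _.
have not_seed : (u, t') \notin [:: (v, t)] by rewrite inE xpair_eqE negb_and neq_uv.
have [w [in_L _]] := log_complete _ _ inf_u not_seed.
by apply/hasP; exists (w, u, t').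
Qed.

Definition candidates : seq (V * nat) :=
  [seq (v, t) | t <- iota 1 Tmax, v <- enum V].

Lemma size_candidates : size candidates = Tmax * #|V|.
Proof. by rewrite size_allpairs size_iota cardE. Qed.

Lemma mem_candidates s : (s \in candidates) = (1 <= s.2 <= Tmax).
Proof.
apply/allpairsP/idP => [[[t v] /= [t_in _ ->]] | t_range].
  by rewrite mem_iota add1n ltnS in t_in.
by exists (s.2, s.1); rewrite mem_iota add1n ltnS mem_enum t_range -surjective_pairing.
Qed.

Definition candidate_query (h : seq (inflog V)) : seeds V :=
  take 1 (drop (size h) candidates).

Definition covered_candidates (r : seq (inflog V)) : seq (V * nat) :=
  [seq pL.1 | pL <- zip candidates r & log_covers pL.1.1 pL.2].

Definition first_covered (r : seq (inflog V)) : option (V * nat) :=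
  ohead (covered_candidates r).

Lemma candidate_query_in_lifetime h s : s \in candidate_query h -> 1 <= s.2 <= Tmax.
Proof. by move=> /mem_take/mem_drop; rewrite mem_candidates. Qed.

Section CandidateLogs.
Variables (r : seq (inflog V)) (lab : V -> V -> nat).
Hypothesis size_r : size r = size candidates.

Lemma consistent_candidate_logs :
  consistent_upto e Tmax delta candidate_query r lab (size candidates) ->
  forall p L, (p, L) \in zip candidates r -> valid_log e Tmax delta lab [:: p] L.
Proof.
move=> consistent p L /(nthP (p, L)) [j].
rewrite size1_zip ?size_r // nth_zip // => lt_j [<- <-].
rewrite (set_nth_default [::]); last by rewrite size_r.
have := consistent j lt_j.
rewrite /candidate_query size_takel; last by rewrite size_r ltnW.
by rewrite (drop_nth p lt_j) /= take0.
Qed.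

Hypothesis valid :
  forall p L, (p, L) \in zip candidates r -> valid_log e Tmax delta lab [:: p] L.

Lemma covered_candidatesP v t :
  (v, t) \in covered_candidates r <-> IPZ e Tmax delta lab v t.
Proof.
have le_size : size candidates <= size r by rewrite size_r.
split=> [/mapP[[[v' t'] L]] | IPZ_vt].
  rewrite mem_filter /= => /andP[covers vtL_in] [-> ->].
  have := mem_zip1 le_size vtL_in; rewrite mem_candidates => t'_range.
  exact/(valid_log_IPZ t'_range (valid vtL_in)).
have vt_in : (v, t) \in candidates by rewrite mem_candidates; case: IPZ_vt.
have [L vtL_in] := zip_partner le_size vt_in.
apply/mapP; exists ((v, t), L) => //.
by rewrite mem_filter vtL_in andbT; apply/(valid_log_IPZ _ (valid vtL_in)); case: IPZ_vt.
Qed.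

Lemma first_covered_correct : answer_correct e Tmax delta lab (first_covered r).
Proof.
rewrite /first_covered; case found: covered_candidates => [|[v t] rest] /=.
  by move=> v t /covered_candidatesP; rewrite found.
by apply/covered_candidatesP; rewrite found mem_head.
Qed.

End CandidateLogs.

End IdealPatientZero.

Theorem mainTheorem10 (V : finType) (e : rel V) (Hsym : symmetric e)
    (Hirr : irreflexive e) (Tmax delta : nat) (Hdelta : 0 < delta) :
  exists2 n, n <= Tmax * #|V| &
    exists (query : seq (inflog V) -> seeds V)
           (answer : seq (inflog V) -> option (V * nat)),
      wins_IPZ_in e Tmax delta n query answer.
Proof.
exists (Tmax * #|V|) => //.
exists (@candidate_query V Tmax), (@first_covered V Tmax).
split=> [h s | r size_r _ lab _ consistent]; first exact: candidate_query_in_lifetime.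
rewrite -size_candidates in size_r consistent.
exact/first_covered_correct/consistent_candidate_logs.
Qed.
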